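(* Let $G$ be a graph with a good partition $(X,\mathcal{B})$ and let $P=(x_1,\dots,x_t)$ be a good permutation of $(X,\mathcal{B})$. Then for every $i\in[t]$ we have $\mathcal{A}^P_i\sqsubseteq\mathcal{B}$, and the graph $G[X\cup\mathsf{notmin}(x_i,\{x_i,\dots,x_t\},\mathcal{A}^P_{i-1})]$ is an $X$-interval graph.
   Context: Partitions are into nonempty blocks; $\mathcal{A}\sqsubseteq\mathcal{B}$ means every block of $\mathcal{A}$ is contained in a block of $\mathcal{B}$. $\mathsf{CC}(H)$ is the partition of $V(H)$ into vertex sets of connected components. For a maximal clique $X$ of a chordal graph $H$, $H$ is an $X$-interval graph if there is an ordering $(K_1,\dots,K_k,X)$ of all maximal cliques of $H$ ending with $X$ such that for each vertex the cliques containing it are consecutive. For $X\subseteq V(G)$, $Y\subseteq X$, a partition $\mathcal{B}$ of $V(G)\setminus X$, a block $B$ and $x\in Y$: $N(x)$ is minimal in $B$ for $Y$ if $N(x)\cap B\subseteq N(y)$ for all $y\in Y$; $x$ is removable from $Y$ for $\mathcal{B}$ if $N(x)$ is minimal for $Y$ in at least $|\mathcal{B}|-1$ blocks. A good partition of $G$ is a pair $(X,\mathcal{B})$, $X$ a maximal clique, $\mathcal{B}$ a partition of $V(G)\setminus X$, with (i) $\mathsf{CC}(G-X)\sqsubseteq\mathcal{B}$; (ii) $G[X\cup B]$ is an $X$-interval graph for all $B\in\mathcal{B}$; (iii) there is an ordering $(x_1,\dots,x_t)$ of $X$, called a good permutation of $(X,\mathcal{B})$, with each $x_i$ removable from $\{x_i,\dots,x_t\}$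 for $\mathcal{B}$. For $W\subseteq X$, $x\in W$ and a partition $\mathcal{A}$ of $V(G)\setminus X$, $\mathsf{notmin}(x,W,\mathcal{A})$ is the union of the blocks $A\in\mathcal{A}$ in which $N(x)$ is not minimal for $W$. For an ordering $P=(x_1,\dots,x_\ell)$ of a subset of $X$: $\mathcal{A}^P_0=\mathsf{CC}(G-X)$, and for $i\in[\ell]$, $\mathcal{A}^P_i$ is obtained from $\mathcal{A}^P_{i-1}$ by replacing the blocks contained in $\mathsf{notmin}(x_i,X\setminus\{x_1,\dots,x_{i-1}\},\mathcal{A}^P_{i-1})$ by their union (nothing changes if there are none). *)

From mathcomp Require Import all_boot.
Set Implicit Arguments. Unset Strict Implicit. Unset Printing Implicit Defensive.

(* Finite simple graph: vertex type T : finType, adjacency e : rel T,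
   assumed symmetric and irreflexive in the theorem. *)
Section Defs.
Variables (T : finType) (e : rel T).

Definition nbh (x : T) : {set T} := [set y | e x y].

Definition erestr (S : {set T}) : rel T := fun u v => [&& u \in S, v \in S & e u v].

Definition ccomp (S : {set T}) : {set {set T}} :=
  [set [set y | connect (erestr S) x y] | x in S].

Definition refines (A B : {set {set T}}) : Prop :=
  forall a, a \in A -> exists2 b, b \in B & a \subset b.

Definition clique_in (S K : {set T}) : Prop :=
  K \subset S /\ (forall x y, x \in K -> y \in K -> x != y -> e x y).

Definition maxclique (S K : {set T}) : Prop :=
  clique_in S K /\ (forall K', clique_in S K' -> K \subset K' -> K' = K).

Definition chordal (S : {set T}) : Prop :=
  forall s : seq T, uniq s -> {subset s <= S} -> 3 < size s -> cycle e s ->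
    exists x y, [/\ x \in s, y \in s, x != y,
                    (y != next s x) && (x != next s y) & e x y].

Definition Xinterval (S X : {set T}) : Prop :=
  [/\ chordal S, maxclique S X &
      exists s : seq {set T},
        [/\ uniq (rcons s X),
            (forall K, K \in rcons s X <-> maxclique S K) &
            (forall v i j k, i <= j -> j <= k -> k < size (rcons s X) ->
               v \in nth set0 (rcons s X) i -> v \in nth set0 (rcons s X) k ->
               v \in nth set0 (rcons s X) j)]].

Definition nminimal (Y b : {set T}) (x : T) : bool :=
  [forall y in Y, nbh x :&: b \subset nbh y].

Definition removable (Y : {set T}) (B : {set {set T}}) (x : T) : bool :=
  #|B| - 1 <= #|[set b in B | nminimal Y b x]|.

Definition good_perm (X : {set T}) (B : {set {set T}}) (P : seq T) : Prop :=
  [/\ uniq P, [set x in P] = X &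
      forall x0 i, i < size P -> removable [set y in drop i P] B (nth x0 P i)].

Definition good_partition (X : {set T}) (B : {set {set T}}) : Prop :=
  [/\ maxclique setT X,
      partition B (~: X),
      refines (ccomp (~: X)) B,
      (forall b, b \in B -> Xinterval (X :|: b) X) &
      exists P, good_perm X B P].

Definition notmin (x : T) (W : {set T}) (A : {set {set T}}) : {set T} :=
  \bigcup_(a in A | ~~ nminimal W a x) a.

Definition Astep (A : {set {set T}}) (W : {set T}) (x : T) : {set {set T}} :=
  let N := notmin x W A in
  let C := [set a in A | a \subset N] in
  (A :\: C) :|: (if C == set0 then set0 else [set \bigcup_(a in C) a]).

Fixpoint Aiter (A : {set {set T}}) (W : {set T}) (P : seq T) (n : nat)
  : {set {set T}} :=
  match n, P with
  | n'.+1, x :: P' => Aiter (Astep A W x) (W :\ x) P' n'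
  | _, _ => A
  end.

Definition AP (X : {set T}) (P : seq T) (i : nat) : {set {set T}} :=
  Aiter (ccomp (~: X)) X P i.

End Defs.

From mathcomp Require Import all_boot.
Set Implicit Arguments. Unset Strict Implicit. Unset Printing Implicit Defensive.

(* Every block of A^P_i is contained in a block of B and contains each neighbour
   outside X of its vertices: both hold for the components of G - X and survive
   merging.  As x_i is removable, N(x_i) fails to be minimal in at most one block
   of B, so notmin(x_i, ..) lies in a single block b of B, which gives the
   refinement.  That set S is again closed under neighbours outside X, so a
   maximal clique of G[X u S] either is X or meets S and cannot leave X u S;
   hence it stays maximal in G[X u b], and the X-interval ordering of G[X u b]
   restricted to the cliques inside X u S is one for G[X u S]. *)

Lemma subseq_nth_homo (A : eqType) (x0 : A) (s1 s2 : seq A) : subseq s1 s2 ->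
  exists2 f : nat -> nat, {homo f : i j / i <= j} &
    forall i, i < size s1 -> f i < size s2 /\ nth x0 s1 i = nth x0 s2 (f i).
Proof.
elim: s2 s1 => [|y s2 IHs] [|x s1] //=; try by exists id.
case: eqP => [<- /IHs [f f_homo f_nth] | _ /IHs [f f_homo f_nth]].
- exists (fun i => if i is i'.+1 then (f i').+1 else 0).
    by move=> [|i] [|j] //=; rewrite !ltnS; apply: f_homo.
  by move=> [|i] //=; rewrite !ltnS => /f_nth.
- exists (fun i => (f i).+1); first by move=> i j; rewrite ltnS; apply: f_homo.
  by move=> i; rewrite ltnS => /f_nth.
Qed.

Lemma setD_take (T : finType) (P : seq T) n : uniq P ->
  [set y in P] :\: [set y in take n P] = [set y in drop n P].
Proof.
move=> P_uniq; have: uniq (take n P ++ drop n P) by rewrite cat_take_drop.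
rewrite cat_uniq => /and3P [_ disj _]; apply/setP=> y; rewrite !inE.
have -> : (y \in P) = (y \in take n P ++ drop n P) by rewrite cat_take_drop.
rewrite mem_cat.
by have [/(hasPn disj) /negbTE -> | _] := boolP (y \in drop n P); rewrite ?orbT ?orbF ?andNb.
Qed.

Section Graph.
Variables (T : finType) (e : rel T).

Definition consecutive (s : seq {set T}) : Prop :=
  forall v i j k, i <= j -> j <= k -> k < size s ->
    v \in nth set0 s i -> v \in nth set0 s k -> v \in nth set0 s j.

Lemma consecutive_subseq s1 s2 : subseq s1 s2 -> consecutive s2 -> consecutive s1.
Proof.
move=> /(subseq_nth_homo set0) [f f_homo f_nth] cons2 v i j k le_ij le_jk lt_k.
have lt_j : j < size s1 by apply: leq_ltn_trans lt_k.
have [_ ->] := f_nth i (leq_ltn_trans le_ij lt_j).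
have [_ ->] := f_nth j lt_j.
have [lt_fk ->] := f_nth k lt_k.
exact: cons2 (f_homo _ _ le_ij) (f_homo _ _ le_jk) lt_fk.
Qed.

Lemma maxcliqueS (R S K : {set T}) :
  maxclique e R K -> K \subset S -> S \subset R -> maxclique e S K.
Proof.
move=> [[_ K_clique] K_max] KS SR; split=> // K' [K'S K'_clique].
by apply: K_max; split=> //; apply: subset_trans SR.
Qed.

Lemma chordalS (R S : {set T}) : chordal e R -> S \subset R -> chordal e S.
Proof. by move=> R_chordal /subsetP SR s s_uniq sS; apply: R_chordal => // y /sS/SR. Qed.

Lemma clique_chordal (S : {set T}) : clique_in e S S -> chordal e S.
Proof.
move=> [_ S_clique] [|x [|y [|z [|w s]]]] //=.
rewrite !inE !negb_or => /andP[/and3P[xy xz /andP[xw _]] /andP[/and3P[yz _ _] _]] sS _ _.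
exists x, z; split; rewrite ?inE ?eqxx ?orbT //.
  by rewrite (eq_sym z y) yz (eq_sym z x) (negbTE xz) (negbTE yz).
by apply: S_clique => //; apply: sS; rewrite !inE eqxx ?orbT.
Qed.

Definition nbh_closed (X S : {set T}) : Prop :=
  forall u v, u \in S -> v \notin X -> e u v -> v \in S.

Lemma maxclique_nbh_closed (X S R K : {set T}) :
  maxclique e setT X -> nbh_closed X S -> X :|: S \subset R ->
  maxclique e (X :|: S) K -> maxclique e R K.
Proof.
move=> X_max S_closed XS_R [[K_XS K_clique] K_max]; split.
  by split=> //; apply: subset_trans XS_R.
move=> K' [_ K'_clique] KK'; apply: (K_max) => //; split=> //.
have [KX | /subsetPn [u uK uX]] := boolP (K \subset X).
  (* K lies in the clique X, so K = X, and X is maximal in all of G *)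
  have XK : X = K by apply: K_max KX; split; [apply: subsetUl | apply: X_max.1.2].
  rewrite (X_max.2 K') ?subsetUl ?XK //; split=> //; apply: subsetT.
have uS : u \in S by move: (subsetP K_XS u uK); rewrite in_setU (negbTE uX).
apply/subsetP=> w wK'; rewrite in_setU; have [//|wX /=] := boolP (w \in X).
have [<- // | uw] := eqVneq u w.
by apply: S_closed uS wX _; apply: K'_clique => //; apply: (subsetP KK').
Qed.

Lemma Xinterval_nbh_closed (X S R : {set T}) :
  maxclique e setT X -> Xinterval e R X -> X :|: S \subset R -> nbh_closed X S ->
  Xinterval e (X :|: S) X.
Proof.
move=> X_max [R_chordal _ [s [s_uniq s_max s_cons]]] XS_R S_closed.
have X_XS : X \subset X :|: S := subsetUl X S.
split; first exact: chordalS XS_R.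
  exact: maxcliqueS X_max X_XS (subsetT _).
pose inXS := fun K : {set T} => K \subset X :|: S.
exists (filter inXS s).
have -> : rcons (filter inXS s) X = filter inXS (rcons s X).
  by rewrite filter_rcons /inXS X_XS.
split.
- exact: filter_uniq.
- move=> K; rewrite mem_filter; split.
    by case/andP=> K_XS /s_max K_max; apply: maxcliqueS K_max K_XS XS_R.
  by move=> K_max; rewrite /inXS K_max.1.1; apply/s_max; apply: maxclique_nbh_closed K_max.
- by apply: consecutive_subseq s_cons; apply: filter_subseq.
Qed.

Lemma Xinterval_maxclique (X : {set T}) : maxclique e setT X -> Xinterval e X X.
Proof.
move=> X_max; have X_maxX := maxcliqueS X_max (subxx X) (subsetT X).
split=> //; first by apply: clique_chordal; split=> //; apply: X_max.1.2.
exists [::]; split=> // [K|v [|i] [|j] [|k] //].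
rewrite inE; split=> [/eqP -> // | [[KX K_clique] K_max]].
by rewrite (K_max X X_maxX.1 KX).
Qed.

Lemma nminimalS (W a b : {set T}) x :
  a \subset b -> nminimal e W b x -> nminimal e W a x.
Proof.
move=> ab /forall_inP b_min; apply/forall_inP=> y yW.
exact: subset_trans (setIS _ ab) (b_min y yW).
Qed.

Lemma removable_nonminimal_eq (W : {set T}) (B : {set {set T}}) x b1 b2 :
  removable e W B x -> b1 \in B -> b2 \in B ->
  ~~ nminimal e W b1 x -> ~~ nminimal e W b2 x -> b1 = b2.
Proof.
move=> x_rem b1B b2B b1_nmin b2_nmin.
have: #|[set b in B | ~~ nminimal e W b x]| <= 1.
  have <- : B :\: [set b | nminimal e W b x] = [set b in B | ~~ nminimal e W b x].
    by apply/setP=> b; rewrite !inE andbC.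
  move: x_rem; rewrite /removable setIdE -(cardsID [set b | nminimal e W b x] B).
  by rewrite leq_subLR addnC leq_add2r.
by move/card_le1_eqP; apply; rewrite inE ?b1B ?b2B.
Qed.

Lemma notmin_sub_block (A B : {set {set T}}) (W : {set T}) x :
  refines A B -> removable e W B x -> notmin e x W A != set0 ->
  exists2 b, b \in B & notmin e x W A \subset b.
Proof.
have nonmin_block a : a \in A -> ~~ nminimal e W a x -> refines A B ->
    exists2 b, b \in B & (a \subset b) && ~~ nminimal e W b x.
  move=> aA a_nmin /(_ a aA) [b bB ab]; exists b; rewrite ?ab //=.
  by apply: contra a_nmin; apply: nminimalS.
move=> AB x_rem /set0Pn [v /bigcupP [a /andP [aA a_nmin] _]].
have [b bB /andP [_ b_nmin]] := nonmin_block a aA a_nmin AB.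
exists b => //; apply/bigcupsP=> a' /andP [a'A a'_nmin].
have [b' b'B /andP [a'b' b'_nmin]] := nonmin_block a' a'A a'_nmin AB.
by rewrite (removable_nonminimal_eq x_rem bB b'B b_nmin b'_nmin).
Qed.

Lemma nbh_closed_bigcup (X : {set T}) (P : pred {set T}) :
  (forall a, P a -> nbh_closed X a) -> nbh_closed X (\bigcup_(a | P a) a).
Proof.
move=> P_closed u v /bigcupP [a Pa ua] vX uv.
by apply/bigcupP; exists a => //; apply: P_closed ua vX uv.
Qed.

Definition closed_refinement (X : {set T}) (B A : {set {set T}}) : Prop :=
  refines A B /\ forall a, a \in A -> nbh_closed X a.

Lemma Astep_closed_refinement (X W : {set T}) (A B : {set {set T}}) x :
  removable e W B x -> closed_refinement X B A ->
  closed_refinement X B (Astep e A W x).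
Proof.
move=> x_rem [AB A_closed]; rewrite /Astep.
set N := notmin e x W A; set C := [set a in A | a \subset N].
have [-> | C_ne0] := eqVneq C set0.
  by rewrite setD0 setU0.
have [a aC] := set0Pn _ C_ne0.
have aA : a \in A by move: aC; rewrite inE => /andP [].
have CN : \bigcup_(a in C) a \subset N by apply/bigcupsP=> a'; rewrite inE => /andP [].
split=> a'; rewrite !inE.
- case/orP=> [/andP [_ a'A] | /eqP ->]; first exact: AB.
  have [N0 | N_ne0] := eqVneq N set0.
    have [b bB ab] := AB a aA.
    by exists b => //; apply: subset_trans CN _; rewrite N0 sub0set.
  have [b bB Nb] := notmin_sub_block AB x_rem N_ne0.
  by exists b => //; apply: subset_trans CN Nb.
- case/orP=> [/andP [_ a'A] | /eqP ->]; first exact: A_closed.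
  by apply: nbh_closed_bigcup => a'' /[!inE] /andP [/A_closed].
Qed.

Lemma ccomp_nbh_closed (X a : {set T}) : a \in ccomp e (~: X) -> nbh_closed X a.
Proof.
case/imsetP=> z zX -> u v; rewrite !inE => zu vX uv.
have erestr_closed : closed (erestr e (~: X)) (~: X).
  by move=> p q /and3P [-> -> _].
have uX : u \in ~: X by rewrite -(closed_connect erestr_closed zu).
by apply: connect_trans zu (connect1 _); rewrite /erestr uX inE vX uv.
Qed.

Lemma AiterS (A : {set {set T}}) (W : {set T}) (P : seq T) n x0 : n < size P ->
  Aiter e A W P n.+1 = Astep e (Aiter e A W P n) (W :\: [set y in take n P]) (nth x0 P n).
Proof.
have Aiter0 A' W' P' : Aiter e A' W' P' 0 = A' by case: P'.
elim: P A W n => [|x P IHP] A W [|n] //= lt_n.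
- have -> : W :\: [set y in [::]] = W by apply/setP=> y; rewrite !inE.
  by rewrite Aiter0.
- have -> : W :\: [set y in x :: take n P] = W :\ x :\: [set y in take n P].
    by apply/setP=> y; rewrite !inE negb_or andbCA andbA.
  exact: IHP.
Qed.

Lemma APS (X : {set T}) (P : seq T) n x0 :
  uniq P -> [set y in P] = X -> n < size P ->
  AP e X P n.+1 = Astep e (AP e X P n) [set y in drop n P] (nth x0 P n).
Proof. by move=> P_uniq <- lt_n; rewrite /AP (AiterS _ _ x0 lt_n) setD_take. Qed.

Lemma AP_closed_refinement (X : {set T}) (B : {set {set T}}) (P : seq T) n :
  good_partition e X B -> good_perm e X B P -> n <= size P ->
  closed_refinement X B (AP e X P n).
Proof.
move=> [_ _ ccomp_B _ _] [P_uniq P_X P_rem]; elim: n => [|n IHn] lt_n.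
  have -> : AP e X P 0 = ccomp e (~: X) by case: (P).
  by split=> // a; apply: ccomp_nbh_closed.
have x0 : T by case: (P) lt_n.
rewrite (APS x0 P_uniq P_X lt_n); apply: Astep_closed_refinement.
  exact: P_rem.
exact: IHn (ltnW lt_n).
Qed.

End Graph.

Theorem lemma4 (T : finType) (e : rel T) (He_sym : symmetric e)
  (He_irr : irreflexive e) (X : {set T}) (B : {set {set T}}) (P : seq T) :
  good_partition e X B -> good_perm e X B P ->
  forall (x0 : T) (k : nat), k < size P ->
    refines (AP e X P k.+1) B /\
    Xinterval e (X :|: notmin e (nth x0 P k) [set y in drop k P] (AP e X P k)) X.
Proof.
move=> good_XB good_P x0 k lt_k.
have [refines_next _] := AP_closed_refinement good_XB good_P lt_k.
split=> //.
have [X_max _ _ X_int _] := good_XB.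
have [_ _ P_rem] := good_P.
have [AP_B AP_closed] := AP_closed_refinement good_XB good_P (ltnW lt_k).
set N := notmin _ _ _ _.
have N_closed : nbh_closed e X N.
  by apply: nbh_closed_bigcup => a /andP [/AP_closed].
have [-> | N_ne0] := eqVneq N set0.
  by rewrite setU0; apply: Xinterval_maxclique.
have [b bB Nb] := notmin_sub_block AP_B (P_rem x0 k lt_k) N_ne0.
by apply: Xinterval_nbh_closed X_max (X_int b bB) (setUS X Nb) N_closed.
Qed.
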